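(* Let $n\ge1$, $k\ge2$, let $\nu$ be a distribution on $[k]$ with $\nu(i)>0$ for all $i$, and let $\Pi$ be a deterministic $k$-party protocol which solves unique set-disjointness under $\mathcal{D}_\nu$ with error at most $2\%$. Let $(W,X)$ be sampled as in the definition of $\mathcal{D}^0_\nu$ and define $$L=\frac1n\sum_{i\in[k]}\frac{1}{\nu(i)}\sum_{j\in[n]}I\big(X_i(j):\Pi(X)\,\big|\,W\big).$$ Then there is a $k$-party protocol $\Lambda$ for the $k$-bit AND function (player $i$ holds a bit $U_i$; the goal is to output $\prod_i U_i$), using public randomness $R$ and private randomness, such that: (1) on input $0^k$ and on input $1^k$, $\Lambda$ outputs the wrong value with probability at most $8\%$; and (2) $L=\sum_{i\in[k]} I\big(b:\Lambda(e_i[b],R)\,\big|\,R\big)$, where $b$ is a uniform bit independent of all randomness of $\Lambda$.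
   Context: Inputs are $X=(X_1,\ldots,X_k)\in(\{0,1\}^n)^k$, player $i$ holding $X_i$; $X^j=(X_1(j),\ldots,X_k(j))$, $|X^j|$ its Hamming weight; $\mathcal{F}_0=\{X:\forall j,|X^j|\le1\}$ and $\mathcal{F}_1=\{X:\exists j,|X^j|=k,\forall j'\neq j,|X^{j'}|\le1\}$, correct output $b$ on $\mathcal{F}_b$. Protocols are in the blackboard model; $\Pi(X)$ and $\Lambda(U,R)$ denote transcripts (whose output bit is determined by the transcript). $\mathcal{D}^0_\nu$: sample $W\in[k]^n$ with i.i.d. coordinates $\sim\nu$; for each $j$, if $W_j=i$ then $X_i(j)$ is a uniform bit and $X_{i'}(j)=0$ for $i'\ne i$. $\mathcal{D}^1_\nu$: sample $X\sim\mathcal{D}^0_\nu$ and uniform $j^*\in[n]$, set $X^{j^*}=1^k$. $\mathcal{D}_\nu$: uniform bit $b$, then $X\sim \mathcal{D}^b_\nu$; error is the probability the output differs from $b$. For $i\in[k]$ and a bit $b$, $e_i[b]\in\{0,1\}^k$ is the vector with $b$ in coordinate $i$ and $0$ elsewhere. *)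

From HB Require Import structures.
From mathcomp Require Import all_boot all_order all_algebra.
From mathcomp Require Import reals exp.
Set Implicit Arguments. Unset Strict Implicit. Unset Printing Implicit Defensive.
Import Order.TTheory GRing.Theory Num.Theory.
Local Open Scope ring_scope.

(* Each player holds a private value of type [A].  At an internal node,
   the player [i] (determined by the board so far, i.e. by the position in
   the tree) writes a bit [f (x i)] on the board, computed from its own
   input (the dependence on the board contents is the position in the tree);
   the protocol continues in the left subtree on bit [false], right on [true]. *)
Inductive protocol (k : nat) (A : Type) : Type :=
| Leaf of bool
| Node of 'I_k & (A -> bool) & protocol k A & protocol k A.
Arguments Leaf {k A}.

Fixpoint run (k : nat) (A : Type) (p : protocol k A) (x : 'I_k -> A)
  : seq bool * bool :=
  match p with
  | Leaf o => ([::], o)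
  | Node i f p0 p1 =>
      let c := f (x i) in
      let r := run (if c then p1 else p0) x in (c :: r.1, r.2)
  end.

Definition transcript k A (p : protocol k A) (x : 'I_k -> A) : seq bool :=
  (run p x).1.
(* output bit (a function of the transcript, since the tree is fixed) *)
Definition output k A (p : protocol k A) (x : 'I_k -> A) : bool :=
  (run p x).2.

Definition is_dist (R : realType) (T : finType) (p : T -> R) : Prop :=
  (forall t, 0 <= p t) /\ \sum_(t : T) p t = 1.

Definition Pr (R : realType) (T : finType) (p : T -> R) (E : pred T) : R :=
  \sum_(t : T | E t) p t.

Definition log2 (R : realType) (x : R) : R := ln x / ln 2.

Definition cmi (R : realType) (T : finType) (p : T -> R)
  (A B C : eqType) (a : T -> A) (b : T -> B) (c : T -> C) : R :=
  \sum_(t : T) p t *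
    log2 ((Pr p [pred s | [&& a s == a t, b s == b t & c s == c t]]
           * Pr p [pred s | c s == c t])
          / (Pr p [pred s | (a s == a t) && (c s == c t)]
             * Pr p [pred s | (b s == b t) && (c s == c t)])).

(* X = (X_1,...,X_k), X_i : {0,1}^n, encoded as x i j = X_i(j). *)
Definition inputs (k n : nat) := {ffun 'I_k -> {ffun 'I_n -> bool}}.

(* probability of (W, X) = (w, x) under the sampling of D^0_nu *)
Definition D0 (R : realType) (k n : nat) (nu : 'I_k -> R)
  (w : {ffun 'I_n -> 'I_k}) (x : inputs k n) : R :=
  \prod_(j < n) (nu (w j) *
     (if [forall i : 'I_k, (i != w j) ==> ~~ x i j] then 2^-1 else 0)).

Definition setcol (k n : nat) (x : inputs k n) (j : 'I_n) : inputs k n :=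
  [ffun i => [ffun j' => if j' == j then true else x i j']].

(* error of a deterministic protocol under D_nu (b uniform, X ~ D^b_nu) *)
Definition disj_error (R : realType) (k n : nat) (nu : 'I_k -> R)
  (P : protocol k {ffun 'I_n -> bool}) : R :=
  2^-1 * (\sum_(w : {ffun 'I_n -> 'I_k}) \sum_(x : inputs k n)
            D0 nu w x * (if output P (fun i => x i) then 1 else 0))
  + 2^-1 * (\sum_(w : {ffun 'I_n -> 'I_k}) \sum_(x : inputs k n)
            D0 nu w x * (n%:R^-1 * \sum_(j < n)
               (if output P (fun i => setcol x j i) then 0 else 1))).

Definition infoL (R : realType) (k n : nat) (nu : 'I_k -> R)
  (P : protocol k {ffun 'I_n -> bool}) : R :=
  n%:R^-1 * \sum_(i < k) (nu i)^-1 * \sum_(j < n)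
    cmi (fun om : {ffun 'I_n -> 'I_k} * inputs k n => D0 nu om.1 om.2)
        (fun om => om.2 i j)
        (fun om => transcript P (fun i' => om.2 i'))
        (fun om => om.1).

Definition evec (k : nat) (i : 'I_k) (b : bool) : 'I_k -> bool :=
  fun i' => if i' == i then b else false.

(* Randomized protocol for AND_k: public randomness r : RT with law pR,
   private randomness ps i : PT of player i with law mu i (independent);
   for each value r of the public coin, a deterministic protocol in which
   player i holds (U_i, ps i). *)
Definition and_error (R : realType) (k : nat) (RT PT : finType)
  (pR : RT -> R) (mu : 'I_k -> PT -> R)
  (Lam : RT -> protocol k (bool * PT)) (u : bool) : R :=
  \sum_(r : RT) \sum_(ps : {ffun 'I_k -> PT})
    pR r * (\prod_(i < k) mu i (ps i)) *
    (if output (Lam r) (fun i => (u, ps i)) != u then 1 else 0).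

(* I(b : Lambda(e_i[b], R) | R) with b uniform, independent of R and of the
   private randomness *)
Definition and_info (R : realType) (k : nat) (RT PT : finType)
  (pR : RT -> R) (mu : 'I_k -> PT -> R)
  (Lam : RT -> protocol k (bool * PT)) (i : 'I_k) : R :=
  cmi (fun om : bool * RT * {ffun 'I_k -> PT} =>
         2^-1 * pR om.1.2 * \prod_(i' < k) mu i' (om.2 i'))
      (fun om => om.1.1)
      (fun om => transcript (Lam om.1.2)
                   (fun i' => (evec i om.1.1 i', om.2 i')))
      (fun om => om.1.2).

From HB Require Import structures.
From mathcomp Require Import all_boot all_order all_algebra.
From mathcomp Require Import reals exp.
From mathcomp Require Import ring lra perm.
Set Implicit Arguments. Unset Strict Implicit. Unset Printing Implicit Defensive.
Import Order.TTheory GRing.Theory Num.Theory.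
Local Open Scope ring_scope.

(* The AND protocol runs the disjointness protocol P on an input into which
   the AND instance is planted.  A public coin (J, W) picks a uniform column
   J and an owner W_j' ~ nu for every other column j' (W_J is fixed to an
   arbitrary player i0; it is irrelevant).  Player i privately draws uniform
   bits Y^i and, holding the AND bit U_i, plays P with the row
   X_i(J) = U_i and X_i(j') = [W_j' = i] && Y^i_j' for j' <> J.

   It then describes D^0_nu as the pushforward of the
   law of (W, Y), Y uniform bits (D0_pushforward).
   - Information: on input e_i[b] the sample (b, coins) is mapped to
     (J, W[J := i], Y) with Y_J = b, whose law is the (W, Y)-law conditioned
     on W_J = i times a uniform J (info_pushforward).  Splitting over J and
     removing the event W_J = i (weight 1/nu(i)) yields exactly the i-th
     term of L (and_info_eq).
   - Error: on input 1^k the run is P on D^1_nu with planted column J, so the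
     error is the D^1-error of P; on input 0^k it is P on D^0_nu with Y_J
     forced to 0, which at most doubles the D^0-error.  The disjointness error
     is the average of both, so both are at most 4%, giving 8%. *)

Section FiniteProbability.
Variable R : realType.

Definition info_density (T : finType) (p : T -> R) (A B C : eqType)
  (a : T -> A) (b : T -> B) (c : T -> C) (t : T) : R :=
  log2 ((Pr p [pred s | [&& a s == a t, b s == b t & c s == c t]]
         * Pr p [pred s | c s == c t])
        / (Pr p [pred s | (a s == a t) && (c s == c t)]
           * Pr p [pred s | (b s == b t) && (c s == c t)])).

Lemma cmiE (T : finType) (p : T -> R) (A B C : eqType)
  (a : T -> A) (b : T -> B) (c : T -> C) :
  cmi p a b c = \sum_t p t * info_density p a b c t.
Proof. by []. Qed.

Lemma sum_pair (I S : finType) (F : I * S -> R) :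
  \sum_t F t = \sum_j \sum_s F (j, s).
Proof. by rewrite pair_bigA; apply: eq_bigr => -[]. Qed.

Lemma Pr_eq_on_support (T : finType) (p : T -> R) (E E' : pred T) :
  (forall s, p s != 0 -> E s = E' s) -> Pr p E = Pr p E'.
Proof.
move=> EE'; rewrite /Pr [LHS]big_mkcond [RHS]big_mkcond; apply: eq_bigr => s _.
have [->|/EE' -> //] := eqVneq (p s) 0.
by case: (E s); case: (E' s).
Qed.

Lemma cmi_eq_on_support (T : finType) (p p' : T -> R) (A B C A' B' C' : eqType)
  (a : T -> A) (b : T -> B) (c : T -> C)
  (a' : T -> A') (b' : T -> B') (c' : T -> C') :
  p =1 p' ->
  (forall t s, p t != 0 -> p s != 0 -> (a s == a t) = (a' s == a' t)) ->
  (forall t s, p t != 0 -> p s != 0 -> (b s == b t) = (b' s == b' t)) ->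
  (forall t s, p t != 0 -> p s != 0 -> (c s == c t) = (c' s == c' t)) ->
  cmi p a b c = cmi p' a' b' c'.
Proof.
move=> pp' ha hb hc; rewrite !cmiE; apply: eq_bigr => t _.
rewrite -pp'; have [->|pt] := eqVneq (p t) 0; first by rewrite !mul0r.
have Pr_eq (X Y : pred T) : (forall s, p s != 0 -> X s = Y s) -> Pr p X = Pr p' Y.
  by move=> XY; rewrite (Pr_eq_on_support XY) /Pr; apply: eq_bigr => s _.
congr (_ * log2 (_ * _ / (_ * _))); apply: Pr_eq => s ps /=;
  by rewrite ?ha ?hb ?hc.
Qed.

Definition pushforward (T1 T2 : finType) (phi : T1 -> T2) (p1 : T1 -> R)
  (p2 : T2 -> R) := forall s, p2 s = \sum_(t | phi t == s) p1 t.

Lemma expectation_pushforward (T1 T2 : finType) (phi : T1 -> T2) p1 p2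
  (G : T2 -> R) :
  pushforward phi p1 p2 -> \sum_t p1 t * G (phi t) = \sum_s p2 s * G s.
Proof.
move=> push; rewrite (partition_big phi predT) //=; apply: eq_bigr => s _.
by rewrite push big_distrl /=; apply: eq_bigr => t /eqP ->.
Qed.

Lemma Pr_pushforward (T1 T2 : finType) (phi : T1 -> T2) p1 p2 (E : pred T2) :
  pushforward phi p1 p2 -> Pr p1 [pred t | E (phi t)] = Pr p2 E.
Proof.
move=> push; rewrite /Pr big_mkcond [RHS]big_mkcond /=.
have /= expE := expectation_pushforward (fun s => if E s then (1 : R) else 0) push.
transitivity (\sum_t p1 t * (if E (phi t) then 1 else 0)).
  by apply: eq_bigr => t _; case: (E _); rewrite ?mulr1 ?mulr0.
by rewrite expE; apply: eq_bigr => s _; case: (E s); rewrite ?mulr1 ?mulr0.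
Qed.

Lemma cmi_pushforward (T1 T2 : finType) (phi : T1 -> T2) p1 p2 (A B C : eqType)
  (a : T2 -> A) (b : T2 -> B) (c : T2 -> C) :
  pushforward phi p1 p2 ->
  cmi p1 (fun t => a (phi t)) (fun t => b (phi t)) (fun t => c (phi t))
  = cmi p2 a b c.
Proof.
move=> push; rewrite !cmiE -(expectation_pushforward _ push).
by apply: eq_bigr => t _; rewrite /info_density -!(Pr_pushforward _ push).
Qed.

Lemma ratio_scale (l x y z u : R) : l != 0 ->
  (l * x) * (l * y) / ((l * z) * (l * u)) = x * y / (z * u).
Proof.
move=> l0; have [zu0|zu0] := eqVneq (z * u) 0.
  have -> : (l * z) * (l * u) = 0 by rewrite mulrACA zu0 mulr0.
  by rewrite zu0 !invr0 !mulr0.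
have [z0 u0] : z != 0 /\ u != 0.
  by split; apply/eqP => e; move: zu0; rewrite e ?mul0r ?mulr0 eqxx.
by field; rewrite l0 z0 u0.
Qed.

Lemma Pr_reweight (T : finType) (p : T -> R) (C : eqType) (c : T -> C)
  (l : C -> R) (E : pred T) (g : C) :
  (forall s, E s -> c s = g) -> Pr (fun t => l (c t) * p t) E = l g * Pr p E.
Proof. by move=> Ec; rewrite /Pr big_distrr; apply: eq_bigr => s /Ec ->. Qed.

Lemma cmi_reweight (T : finType) (p : T -> R) (A B C : eqType)
  (a : T -> A) (b : T -> B) (c : T -> C) (l : C -> R) :
  cmi (fun t => l (c t) * p t) a b c
  = \sum_t l (c t) * p t * info_density p a b c t.
Proof.
rewrite cmiE; apply: eq_bigr => t _.
have [->|lt] := eqVneq (l (c t)) 0; first by rewrite !mul0r.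
congr (_ * _); rewrite /info_density.
rewrite !(@Pr_reweight _ _ _ c l _ (c t)) ?ratio_scale //= => s.
- by case/andP => _ /eqP.
- by case/andP => _ /eqP.
- by move=> /eqP.
- by case/and3P => _ _ /eqP.
Qed.

Lemma log2_0 : log2 (0 : R) = 0.
Proof. by rewrite /log2 ln0 ?mul0r. Qed.

Lemma log2_1 : log2 (1 : R) = 0.
Proof. by rewrite /log2 ln1 mul0r. Qed.

Lemma info_density_determined (T : finType) (p : T -> R) (A B C : eqType)
  (a : T -> A) (b : T -> B) (c : T -> C) t :
  (forall s, c s == c t -> a s = a t) -> info_density p a b c t = 0.
Proof.
move=> ac; rewrite /info_density.
have -> : Pr p [pred s | [&& a s == a t, b s == b t & c s == c t]] =
          Pr p [pred s | (b s == b t) && (c s == c t)].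
  apply: Pr_eq_on_support => s _ /=.
  case: (c s =P c t) => [/eqP e|]; last by rewrite !andbF.
  by rewrite (ac _ e) eqxx.
have -> : Pr p [pred s | (a s == a t) && (c s == c t)] = Pr p [pred s | c s == c t].
  apply: Pr_eq_on_support => s _ /=.
  case: (c s =P c t) => [/eqP e|]; last by rewrite !andbF.
  by rewrite (ac _ e) eqxx.
set x := Pr p _; set y := Pr p _.
rewrite [y * x]mulrC; have [xy0|xy0] := eqVneq (x * y) 0.
  by rewrite xy0 mul0r log2_0.
by rewrite divff // log2_1.
Qed.

Lemma Pr_pair (I S : finType) (al : R) (q : I -> S -> R) (E : pred (I * S))
  (j : I) :
  (forall j' s', E (j', s') -> j' = j) ->
  Pr (fun t : I * S => al * q t.1 t.2) E = al * Pr (q j) [pred s | E (j, s)].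
Proof.
move=> Ej; rewrite /Pr big_mkcond sum_pair (bigD1 j) //= [X in _ + X]big1 ?addr0.
  rewrite big_distrr [RHS]big_mkcond; apply: eq_bigr => s _ /=.
  by case: (E _); rewrite ?mulr0.
move=> j' jj; apply: big1 => s _; case: ifP => // /Ej e.
by move: jj; rewrite e eqxx.
Qed.

Lemma cmi_split_index (I S : finType) (al : R) (q : I -> S -> R) (A B C : eqType)
  (a : I -> S -> A) (b : I -> S -> B) (c : I -> S -> C) : al != 0 ->
  cmi (fun t : I * S => al * q t.1 t.2) (fun t => a t.1 t.2)
      (fun t => b t.1 t.2) (fun t => (t.1, c t.1 t.2))
  = \sum_j al * cmi (q j) (a j) (b j) (c j).
Proof.
move=> al0; rewrite cmiE sum_pair; apply: eq_bigr => j _.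
rewrite cmiE big_distrr; apply: eq_bigr => s _ /=; rewrite mulrA; congr (_ * _).
rewrite /info_density /= !(@Pr_pair _ _ _ _ _ j) ?ratio_scale //=.
- by congr (log2 (_ * _ / (_ * _))); apply: Pr_eq_on_support => s' _ /=;
    rewrite xpair_eqE eqxx.
all: move=> j' s' /=; rewrite xpair_eqE => Ej'; apply/eqP; move: Ej'.
all: first [by case/and4P|by case/and3P|by case/andP].
Qed.

Lemma cmi_restrict (T : finType) (p : T -> R) (A B C : eqType)
  (a a' : T -> A) (b : T -> B) (c : T -> C) (P : pred C) (ka : R) :
  (forall s, P (c s) -> a s = a' s) ->
  (forall t s, ~~ P (c t) -> c s == c t -> a' s = a' t) ->
  cmi (fun t => (if P (c t) then ka else 0) * p t) a b c = ka * cmi p a' b c.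
Proof.
move=> aa' a'c; rewrite (cmi_reweight p a b c (fun g => if P g then ka else 0)).
rewrite cmiE big_distrr; apply: eq_bigr => t _ /=.
case: ifP => Pt; last first.
  by rewrite [info_density p a' _ _ _]info_density_determined ?mul0r ?mulr0 //;
    move=> s; apply: a'c (negbT Pt).
rewrite -mulrA; congr (_ * (_ * _)); rewrite /info_density.
have at_t := aa' _ Pt.
congr (log2 (_ * _ / (_ * _))); apply: Pr_eq_on_support => s _ /=;
  (case: (c s =P c t) => [e|]; last by rewrite !andbF);
  by rewrite aa' ?at_t ?e.
Qed.

End FiniteProbability.

Fixpoint precompose (k : nat) (A B : Type) (g : 'I_k -> B -> A)
  (p : protocol k A) : protocol k B :=
  match p with
  | Leaf o => Leaf o
  | Node i f p0 p1 =>
      Node i (fun z => f (g i z)) (precompose g p0) (precompose g p1)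
  end.

Lemma run_precompose (k : nat) (A B : Type) (g : 'I_k -> B -> A)
  (p : protocol k A) (x : 'I_k -> B) :
  run (precompose g p) x = run p (fun i => g i (x i)).
Proof.
by elim: p => //= i f p0 IH0 p1 IH1; case: (f _) => /=; rewrite ?IH0 ?IH1.
Qed.

Lemma run_ext (k : nat) (A : Type) (p : protocol k A) (x x' : 'I_k -> A) :
  x =1 x' -> run p x = run p x'.
Proof.
move=> xx'; elim: p => //= i f p0 IH0 p1 IH1.
by rewrite xx'; case: (f _); rewrite ?IH0 ?IH1.
Qed.

Section Embedding.
Variables (R : realType) (n k : nat) (nu : 'I_k -> R).
Hypothesis nu_dist : is_dist nu.

(* W assigns an owner to every column; Y is a string of n bits. *)
Definition Assign := {ffun 'I_n -> 'I_k}.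
Definition Bits := {ffun 'I_n -> bool}.

Definition upd (T : Type) (w : {ffun 'I_n -> T}) (j : 'I_n) (v : T)
  : {ffun 'I_n -> T} := [ffun j' => if j' == j then v else w j'].

Lemma upd_id (T : finType) (y : {ffun 'I_n -> T}) j : upd y j (y j) = y.
Proof. by apply/ffunP => j'; rewrite ffunE; case: eqP => // ->. Qed.

Lemma upd_upd (T : finType) (y : {ffun 'I_n -> T}) j a b :
  upd (upd y j a) j b = upd y j b.
Proof. by apply/ffunP => j'; rewrite !ffunE; case: eqP. Qed.

(* For G insensitive to the column j, the slices {w j = a} and {w j = b}
   carry the same sum (exchange a and b in column j). *)
Lemma sum_slice_swap (T : finType) j (a b : T) (G : {ffun 'I_n -> T} -> R) :
  (forall w v, G (upd w j v) = G w) ->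
  \sum_(w : {ffun 'I_n -> T}) (if w j == a then G w else 0) =
  \sum_(w : {ffun 'I_n -> T}) (if w j == b then G w else 0).
Proof.
move=> Gj; pose sw (w : {ffun 'I_n -> T}) := upd w j (tperm a b (w j)).
have swK : involutive sw.
  by move=> w; rewrite /sw upd_upd ffunE eqxx tpermK upd_id.
rewrite (reindex_inj (inv_inj swK)); apply: eq_bigr => w _.
rewrite /sw Gj ffunE eqxx.
by rewrite -[X in _ == X](tpermR a b) (inj_eq perm_inj).
Qed.

Definition inputWY (w : Assign) (y : Bits) : inputs k n :=
  [ffun i => [ffun j => (w j == i) && y j]].

Definition lawWY (w : Assign) (y : Bits) : R := (\prod_j nu (w j)) * (2^-1)^+n.

Lemma lawWY_ge0 w y : 0 <= lawWY w y.
Proof.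
case: nu_dist => nu_ge0 _.
by rewrite mulr_ge0 ?exprn_ge0 ?invr_ge0 // prodr_ge0.
Qed.

Lemma inputWY_eq w y x : (inputWY w y == x) =
  [forall j, [forall i : 'I_k, (i != w j) ==> ~~ x i j]]
  && (y == [ffun j => x (w j) j]).
Proof.
apply/eqP/andP => [<-|[/forallP ok /eqP ->]].
  split; last by apply/eqP/ffunP => j; rewrite !ffunE eqxx.
  apply/forallP => j; apply/forallP => i; apply/implyP => ne.
  by rewrite !ffunE eq_sym (negbTE ne).
apply/ffunP => i; apply/ffunP => j; rewrite !ffunE.
case: eqP => [<- //|ne]; have := forallP (ok j) i.
by rewrite eq_sym; move/eqP: ne => -> /= /negbTE ->.
Qed.

Lemma D0_pushforward :
  pushforward (fun t : Assign * Bits => (t.1, inputWY t.1 t.2))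
    (fun t => lawWY t.1 t.2) (fun om : Assign * inputs k n => D0 nu om.1 om.2).
Proof.
move=> [w x] /=; rewrite big_mkcond sum_pair (bigD1 w) //= [X in _ + X]big1 ?addr0;
  last first.
  by move=> w' ne; apply: big1 => y _; rewrite xpair_eqE (negbTE ne).
under eq_bigr do rewrite xpair_eqE eqxx /= inputWY_eq.
rewrite /D0 big_split /=.
case: (boolP [forall j, _]) => [/forallP ok|/forallP nok].
  rewrite (bigD1 [ffun j => x (w j) j]) //= eqxx [X in _ + X]big1 ?addr0; last first.
    by move=> y ne; rewrite (negbTE ne) ?andbF.
  rewrite /lawWY; congr (_ * _).
  rewrite (eq_bigr (fun _ => 2^-1)) ?prodr_const ?card_ord //.
  by move=> j _; rewrite ok.
rewrite [RHS]big1 //.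
have [j nj] : exists j, ~~ [forall i : 'I_k, (i != w j) ==> ~~ x i j].
  by apply/existsP; rewrite -negb_forall; apply/negP => /forallP.
by rewrite [X in _ * X](bigD1 j) //= (negbTE nj) mul0r mulr0.
Qed.

Lemma D0_expectation (H : Assign -> inputs k n -> R) :
  \sum_(w : Assign) \sum_(x : inputs k n) D0 nu w x * H w x =
  \sum_(w : Assign) \sum_(y : Bits) lawWY w y * H w (inputWY w y).
Proof.
transitivity (\sum_(om : Assign * inputs k n) D0 nu om.1 om.2 * H om.1 om.2).
  by rewrite sum_pair.
transitivity (\sum_(t : Assign * Bits) lawWY t.1 t.2 * H t.1 (inputWY t.1 t.2));
  last by rewrite sum_pair.
symmetry.
exact: (expectation_pushforward (fun om : Assign * inputs k n => H om.1 om.2)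
          D0_pushforward).
Qed.


(* The AND protocol.  The public coin (J, W) has J uniform and W_j' ~ nu for
   j' <> J, while W_J is fixed to the player i0 (column J is overwritten by
   the AND bits, so its owner is irrelevant). *)
Variable i0 : 'I_k.

Definition coin_weight (j : 'I_n) (w : Assign) : R :=
  \prod_j' (if j' == j then (if w j' == i0 then 1 else 0) else nu (w j')).

Definition coin_law (rt : 'I_n * Assign) : R := n%:R^-1 * coin_weight rt.1 rt.2.

Definition PrivCoins := {ffun 'I_k -> Bits}.

Definition priv_law (i : 'I_k) (y : Bits) : R := (2^-1)^+n.

Definition row_input (j : 'I_n) (w : Assign) (i : 'I_k) (z : bool * Bits)
  : Bits := [ffun j' => if j' == j then z.1 else (w j' == i) && z.2 j'].

Variable P : protocol k {ffun 'I_n -> bool}.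

Definition and_protocol (rt : 'I_n * Assign) : protocol k (bool * Bits) :=
  precompose (row_input rt.1 rt.2) P.

Lemma dist_priv_law i : is_dist (priv_law i).
Proof.
split=> [y|]; first by rewrite /priv_law exprn_ge0 // invr_ge0.
rewrite /priv_law sumr_const card_ffun card_bool card_ord.
rewrite -[_ *+ (2 ^ n)]mulr_natr natrX -exprMn.
by rewrite mulVf ?expr1n //; apply/eqP; lra.
Qed.

Lemma dist_coin_law : (0 < n)%N -> is_dist coin_law.
Proof.
move=> n_gt0; case: nu_dist => nu_ge0 nu_sum1; split=> [[j w]|].
  rewrite /coin_law mulr_ge0 ?invr_ge0 ?ler0n // prodr_ge0 // => j' _.
  by case: ifP => _; [case: ifP|apply: nu_ge0].
rewrite sum_pair (eq_bigr (fun _ => n%:R^-1)).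
  by rewrite sumr_const card_ord -[_ *+ n]mulr_natr mulVf // pnatr_eq0 -lt0n.
move=> j _; rewrite /coin_law /coin_weight /= -big_distrr /=.
rewrite -(bigA_distr_bigA (fun j' v =>
  if j' == j then (if v == i0 then 1 else 0) else nu v)).
rewrite big1 ?mulr1 // => j' _; case: (j' == j); last exact: nu_sum1.
by rewrite (bigD1 i0) //= eqxx big1 ?addr0 // => v /negbTE ->.
Qed.

Lemma coin_law_support j w : coin_law (j, w) != 0 -> w j = i0.
Proof.
apply: contraNeq => /negbTE ne; rewrite /coin_law /coin_weight /= (bigD1 j) //=.
by rewrite eqxx eq_sym ne !(mul0r, mulr0).
Qed.

(* The bits actually used in the run: column j' uses the private bits of its
   owner w j'. *)
Definition owner_bits (w : Assign) (ps : PrivCoins) : Bits :=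
  [ffun j' => ps (w j') j'].

Lemma prod_sel (f : 'I_k -> R) (i1 : 'I_k) (b : bool) :
  \prod_i (if b && (i1 == i) then f i else 1) = if b then f i1 else 1.
Proof.
case: b => /=; last by rewrite big1.
rewrite (bigD1 i1) //= eqxx big1 ?mulr1 // => i ne.
by rewrite eq_sym (negbTE ne).
Qed.

Lemma prod_ind (Q E : pred 'I_n) :
  \prod_j (if Q j then (if E j then 1 else 0) else 1) =
  (if [forall j, Q j ==> E j] then 1 else 0) :> R.
Proof.
case: (boolP [forall _, _]) => [/forallP QE|/forallP QE].
  by apply: big1 => j _; have := QE j; case: (Q j) => //= ->.
have [j nj] : exists j, ~~ (Q j ==> E j).
  by apply/existsP; rewrite -negb_forall; apply/negP => /forallP.
rewrite (bigD1 j) //=; move: nj; case: (Q j); case: (E j) => //= _.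
by rewrite mul0r.
Qed.

Lemma sum_priv_coins (w : Assign) (Q : pred 'I_n) (y : Bits) :
  \sum_(ps : PrivCoins) (\prod_i priv_law i (ps i)) *
     \prod_j (if Q j then (if ps (w j) j == y j then 1 else 0) else 1)
  = \prod_j (if Q j then 2^-1 else 1).
Proof.
pose F (i : 'I_k) (j : 'I_n) (be : bool) : R :=
  2^-1 * (if Q j && (w j == i) then (if be == y j then 1 else 0) else 1).
transitivity (\sum_(ps : PrivCoins) \prod_i \prod_j F i j (ps i j)).
  apply: eq_bigr => ps _; rewrite /F.
  under [RHS]eq_bigr do rewrite big_split /=.
  rewrite big_split /=; congr (_ * _).
    by apply: eq_bigr => i _; rewrite /priv_law prodr_const card_ord.
  rewrite exchange_big /=; apply: eq_bigr => j _.
  by rewrite (prod_sel (fun i => if ps i j == y j then 1 else 0)); case: (Q j).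
rewrite -(bigA_distr_bigA (fun i (row : Bits) => \prod_j F i j (row j))) /=.
rewrite (eq_bigr (fun i => \prod_j \sum_be F i j be)); last first.
  by move=> i _; rewrite -(bigA_distr_bigA (F i)).
rewrite exchange_big /=; apply: eq_bigr => j _.
rewrite /F; under eq_bigr do rewrite big_bool /=.
rewrite (eq_bigr (fun i => if Q j && (w j == i) then 2^-1 else 1)).
  by rewrite (prod_sel (fun _ => 2^-1)).
move=> i _; case: (Q j && _); last by rewrite /= mulr1; field.
by case: (y j); rewrite /= ?mulr1 ?mulr0 ?addr0 ?add0r.
Qed.

(* Its sample space carries b,
   the public coin and the private coins; it is mapped to (J, W[J := i], Y)
   where Y is the owner bits with Y_J = b.  The image law is the law of
   (W, Y) conditioned on W_J = i, times a uniform J. *)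
Definition info_law (om : bool * ('I_n * Assign) * PrivCoins) : R :=
  2^-1 * coin_law om.1.2 * \prod_i priv_law i (om.2 i).

Definition info_bits (j : 'I_n) (w : Assign) (b : bool) (ps : PrivCoins) : Bits :=
  upd (owner_bits w ps) j b.

Definition info_map (i : 'I_k) (om : bool * ('I_n * Assign) * PrivCoins)
  : 'I_n * (Assign * Bits) :=
  (om.1.2.1, (upd om.1.2.2 om.1.2.1 i, info_bits om.1.2.1 om.1.2.2 om.1.1 om.2)).

Definition info_pushed_law (i : 'I_k) (t : 'I_n * (Assign * Bits)) : R :=
  n%:R^-1 * ((if t.2.1 t.1 == i then (nu i)^-1 else 0) * lawWY t.2.1 t.2.2).

Lemma sum_info_space (F : bool * ('I_n * Assign) * PrivCoins -> R) :
  \sum_om F om = \sum_b \sum_j \sum_w \sum_ps F ((b, (j, w)), ps).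
Proof. by rewrite !sum_pair; apply: eq_bigr => b _; rewrite sum_pair. Qed.

Lemma info_bits_eq j w b ps y : (info_bits j w b ps == y) =
  (b == y j) && [forall j', (j' != j) ==> (ps (w j') j' == y j')].
Proof.
apply/eqP/andP => [<-|[/eqP -> /forallP yps]].
  split; first by rewrite ffunE eqxx.
  by apply/forallP => j'; apply/implyP => ne; rewrite !ffunE (negbTE ne).
apply/ffunP => j'; rewrite !ffunE; case: eqP => [-> //|/eqP ne].
by have := yps j'; rewrite ne => /eqP.
Qed.

Lemma info_fiber i j w2 y :
  \sum_(om | info_map i om == (j, (w2, y))) info_law om
  = 2^-1 * \sum_(w : Assign) (if upd w j i == w2 then 1 else 0) * coin_law (j, w)
      * \prod_j' (if j' != j then 2^-1 else 1).
Proof.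
rewrite big_mkcond sum_info_space /=.
rewrite (eq_bigr (fun b => \sum_(w : Assign) \sum_(ps : PrivCoins)
   (((if b == y j then 1 else 0) * 2^-1) *
    ((if upd w j i == w2 then 1 else 0) * coin_law (j, w)) *
    ((\prod_i' priv_law i' (ps i')) *
       \prod_j' (if j' != j then (if ps (w j') j' == y j' then 1 else 0)
                 else 1))))); last first.
  move=> b _; rewrite (bigD1 j) //= [X in _ + X]big1 ?addr0; last first.
    move=> j' ne; apply: big1 => w _; apply: big1 => ps _.
    by rewrite /info_map /= xpair_eqE (negbTE ne).
  apply: eq_bigr => w _; apply: eq_bigr => ps _.
  rewrite /info_map /= xpair_eqE eqxx /= xpair_eqE info_bits_eq prod_ind.
  rewrite /info_law /=.
  case: (b == y j); case: (upd w j i == w2); case: [forall _, _];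
    rewrite /= ?mulr0 ?mul0r ?mulr1 ?mul1r //.
  by rewrite mulr0 mul0r.
rewrite (eq_bigr (fun b => ((if b == y j then 1 else 0) * 2^-1) *
   \sum_(w : Assign) (((if upd w j i == w2 then 1 else 0) * coin_law (j, w)) *
     \prod_j' (if j' != j then 2^-1 else 1)))); last first.
  move=> b _; rewrite big_distrr; apply: eq_bigr => w _.
  rewrite -big_distrr /= -mulrA; congr (_ * (_ * _)).
  exact: (sum_priv_coins w (fun j0 => j0 != j)).
rewrite -big_distrl /= big_bool /=; congr (_ * _).
by case: (y j); rewrite /= ?mul1r ?mul0r ?addr0 ?add0r.
Qed.

(* Since W_J = i0 surely, W is recovered from W[J := i]. *)
Lemma sum_coin_update i j (w2 : Assign) :
  \sum_(w : Assign) (if upd w j i == w2 then 1 else 0) * coin_law (j, w) =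
  if w2 j == i then n%:R^-1 * \prod_(j' | j' != j) nu (w2 j') else 0.
Proof.
have [w2j|w2j] := eqVneq (w2 j) i; last first.
  apply: big1 => w _.
  have -> : (upd w j i == w2) = false.
    by apply/negbTE; apply: contra w2j => /eqP <-; rewrite ffunE eqxx.
  by rewrite mul0r.
pose w0 := upd w2 j i0.
rewrite (bigD1 w0) //= [X in _ + X]big1 ?addr0; last first.
  move=> w ne; have [e|] := eqVneq (upd w j i) w2; last by rewrite mul0r.
  have [wj|wj] := eqVneq (w j) i0.
    case/negP: ne; apply/eqP/ffunP => j'; rewrite /w0 -e !ffunE.
    by case: eqP => // ->.
  by rewrite /coin_law /coin_weight /= (bigD1 j) //= eqxx (negbTE wj) !(mul0r, mulr0).
have -> : upd w0 j i = w2.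
  by apply/ffunP => j'; rewrite !ffunE; case: eqP => // ->; rewrite w2j.
rewrite eqxx mul1r /coin_law /coin_weight /= (bigD1 j) //= eqxx /w0 ffunE.
rewrite eqxx eqxx mul1r; congr (_ * _); apply: eq_bigr => j' ne.
by rewrite (negbTE ne) ffunE (negbTE ne).
Qed.

Lemma info_pushforward i : (0 < n)%N -> nu i != 0 ->
  pushforward (info_map i) info_law (info_pushed_law i).
Proof.
move=> n_gt0 nui [j [w2 y]]; rewrite info_fiber -big_distrl /= sum_coin_update.
rewrite /info_pushed_law /lawWY /=.
have [w2j|_] := eqVneq (w2 j) i; last by rewrite !mul0r !mulr0.
set A := \prod_(j' < n | j' != j) nu (w2 j').
set B := \prod_(j' < n | j' != j) (2:R)^-1.
have -> : \prod_j' (if j' != j then 2^-1 else 1) = B.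
  by rewrite (bigD1 j) //= eqxx mul1r; apply: eq_bigr => j' ->.
have -> : \prod_j' nu (w2 j') = nu i * A by rewrite (bigD1 j) //= w2j.
have -> : ((2:R)^-1)^+n = 2^-1 * B.
  by rewrite -(card_ord n) -prodr_const (bigD1 j).
by field; rewrite nui pnatr_eq0 -lt0n n_gt0.
Qed.

Lemma row_input_info i j (w : Assign) b (ps : PrivCoins) i' :
  row_input j w i' (evec i b i', ps i')
  = inputWY (upd w j i) (info_bits j w b ps) i'.
Proof.
apply/ffunP => j'.
rewrite /row_input /inputWY /info_bits /upd /owner_bits /evec !ffunE /=.
case: eqP => _.
  by case: eqP => [->|/eqP ne]; rewrite ?eqxx // eq_sym (negbTE ne).
by case: eqP => [->|].
Qed.

(* The information of the AND protocol is a cmi on the image space: b is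
   Y_J, the transcript is the one of P on the generated input, and the
   conditioning R = (J, W) is equivalent to (J, W[J := i]) as W_J = i0. *)
Lemma and_info_pushforward i :
  and_info coin_law priv_law and_protocol i =
  cmi info_law (fun om => (info_map i om).2.2 (info_map i om).1)
    (fun om => transcript P
       (fun i' => inputWY (info_map i om).2.1 (info_map i om).2.2 i'))
    (fun om => ((info_map i om).1, (info_map i om).2.1)).
Proof.
apply: cmi_eq_on_support => //.
- by move=> t s _ _; rewrite /info_map /info_bits /= !ffunE !eqxx.
- move=> t s _ _; congr (_ == _); rewrite /transcript /and_protocol /=;
    rewrite run_precompose; congr (_.1); apply: run_ext => i';
    exact: row_input_info.
move=> [[bt [jt wt]] pst] [[bs [js ws]] pss] /= ht hs.
have wtj : wt jt = i0.
  by apply: coin_law_support; apply: contraNneq ht => e; rewrite /info_law /= e mulr0 mul0r.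
have wsj : ws js = i0.
  by apply: coin_law_support; apply: contraNneq hs => e; rewrite /info_law /= e mulr0 mul0r.
rewrite /info_map /= !xpair_eqE; have [e|] //= := eqVneq js jt; subst js.
apply/eqP/eqP => [->//|e]; apply/ffunP => j'.
have := congr1 (fun f : Assign => f j') e; rewrite /= !ffunE.
by case: eqP => [->|] //; rewrite wtj wsj.
Qed.

Lemma and_info_eq i : (0 < n)%N -> nu i != 0 ->
  and_info coin_law priv_law and_protocol i = \sum_j n%:R^-1 * ((nu i)^-1 *
    cmi (fun om : Assign * inputs k n => D0 nu om.1 om.2) (fun om => om.2 i j)
        (fun om => transcript P (fun i' => om.2 i')) (fun om => om.1)).
Proof.
move=> n_gt0 nui; rewrite and_info_pushforward.
rewrite (cmi_pushforward (fun t : 'I_n * (Assign * Bits) => t.2.2 t.1)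
  (fun t : 'I_n * (Assign * Bits) => transcript P (fun i' => inputWY t.2.1 t.2.2 i'))
  (fun t : 'I_n * (Assign * Bits) => (t.1, t.2.1))
  (info_pushforward n_gt0 nui)).
rewrite /info_pushed_law (cmi_split_index
  (fun (j : 'I_n) (s : Assign * Bits) =>
     (if s.1 j == i then (nu i)^-1 else 0) * lawWY s.1 s.2)
  (fun (j : 'I_n) (s : Assign * Bits) => s.2 j)
  (fun (j : 'I_n) (s : Assign * Bits) => transcript P (fun i' => inputWY s.1 s.2 i'))
  (fun (j : 'I_n) (s : Assign * Bits) => s.1)); last first.
  by rewrite invr_eq0 pnatr_eq0 -lt0n.
apply: eq_bigr => j _; congr (_ * _).
rewrite (@cmi_restrict _ _ (fun s : Assign * Bits => lawWY s.1 s.2) _ _ _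
  (fun s => s.2 j) (fun s => (s.1 j == i) && s.2 j)
  (fun s => transcript P (fun i' => inputWY s.1 s.2 i'))
  (fun s => s.1) (fun w : Assign => w j == i)).
- congr (_ * _).
  rewrite -(cmi_pushforward (fun t : Assign * inputs k n => t.2 i j)
     (fun t : Assign * inputs k n => transcript P (fun i' => t.2 i'))
     (fun t : Assign * inputs k n => t.1) D0_pushforward).
  by apply: cmi_eq_on_support => // t s _ _ /=; rewrite ?ffunE.
- by move=> s /= ->.
- by move=> t s /= /negbTE ne /eqP ->; rewrite ne.
Qed.

Lemma infoL_eq : (0 < n)%N -> (forall i, nu i != 0) ->
  infoL nu P = \sum_i and_info coin_law priv_law and_protocol i.
Proof.
move=> n_gt0 nu_neq0; rewrite /infoL big_distrr /=; apply: eq_bigr => i _.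
by rewrite and_info_eq // -big_distrr /= -big_distrr /= big_distrr.
Qed.

Definition err_law (om : ('I_n * Assign) * PrivCoins) : R :=
  coin_law om.1 * \prod_i priv_law i (om.2 i).

Definition err_map (om : ('I_n * Assign) * PrivCoins) : 'I_n * (Assign * Bits) :=
  (om.1.1, (om.1.2, owner_bits om.1.2 om.2)).

Definition err_pushed_law (t : 'I_n * (Assign * Bits)) : R :=
  coin_law (t.1, t.2.1) * (2^-1)^+n.

Lemma err_pushforward : pushforward err_map err_law err_pushed_law.
Proof.
move=> [j [w y]]; rewrite big_mkcond !sum_pair /=.
rewrite (bigD1 j) //= [X in _ + X]big1 ?addr0; last first.
  move=> j' ne; apply: big1 => w' _; apply: big1 => ps _.
  by rewrite /err_map xpair_eqE (negbTE ne).
rewrite (bigD1 w) //= [X in _ + X]big1 ?addr0; last first.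
  move=> w' ne; apply: big1 => ps _.
  by rewrite /err_map !xpair_eqE (negbTE ne) andbF.
rewrite /err_pushed_law /=.
rewrite (_ : ((2:R)^-1)^+n = \prod_(j' < n) (if predT j' then 2^-1 else 1));
  last by rewrite (eq_bigr (fun _ => 2^-1)) // prodr_const card_ord.
rewrite -(sum_priv_coins w predT y) /= big_distrr /=; apply: eq_bigr => ps _.
rewrite /err_map /err_law /= !xpair_eqE !eqxx /=.
have -> : \prod_j' (if ps (w j') j' == y j' then 1 else 0) =
          (if owner_bits w ps == y then 1 else 0) :> R.
  rewrite (prod_ind predT (fun j' => ps (w j') j' == y j')) /=.
  congr (if _ then _ else _); apply/forallP/eqP => [psy|<- j'].
    by apply/ffunP => j'; rewrite ffunE; apply/eqP.
  by rewrite ffunE.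
by case: (_ == y); rewrite ?mulr1 ?mulr0.
Qed.

Lemma and_error_expect (u : bool) (G : 'I_n * (Assign * Bits) -> R) :
  (forall r (ps : PrivCoins),
     (if output (and_protocol r) (fun i => (u, ps i)) != u then 1 else 0)
     = G (err_map (r, ps))) ->
  and_error coin_law priv_law and_protocol u = \sum_t err_pushed_law t * G t.
Proof.
move=> errG; rewrite -(expectation_pushforward G err_pushforward).
by rewrite /and_error [RHS]sum_pair; apply: eq_bigr => r _; apply: eq_bigr => ps _;
  rewrite errG.
Qed.

Definition wrong_on_zero (t : 'I_n * (Assign * Bits)) : R :=
  if output P (fun i => inputWY t.2.1 (upd t.2.2 t.1 false) i) then 1 else 0.

Definition wrong_on_one (t : 'I_n * (Assign * Bits)) : R :=
  if output P (fun i => setcol (inputWY t.2.1 t.2.2) t.1 i) then 0 else 1.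

Lemma row_input_zero j (w : Assign) (ps : PrivCoins) i :
  row_input j w i (false, ps i) = inputWY w (upd (owner_bits w ps) j false) i.
Proof.
apply/ffunP => j'; rewrite /row_input /inputWY /owner_bits /upd !ffunE /=.
by case: eqP => _; [rewrite andbF|case: eqP => [->|]].
Qed.

Lemma row_input_one j (w : Assign) (ps : PrivCoins) i :
  row_input j w i (true, ps i) = setcol (inputWY w (owner_bits w ps)) j i.
Proof.
apply/ffunP => j'; rewrite /row_input /inputWY /setcol /owner_bits !ffunE /=.
by case: eqP => _ //; case: eqP => [->|].
Qed.

Lemma and_error_zero_expect :
  and_error coin_law priv_law and_protocol false
  = \sum_t err_pushed_law t * wrong_on_zero t.
Proof.
apply: and_error_expect => r ps.
rewrite /wrong_on_zero /output /and_protocol run_precompose /=.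
by rewrite (run_ext P (row_input_zero r.1 r.2 ps)); case: (run _ _).2.
Qed.

Lemma and_error_one_expect :
  and_error coin_law priv_law and_protocol true
  = \sum_t err_pushed_law t * wrong_on_one t.
Proof.
apply: and_error_expect => r ps.
rewrite /wrong_on_one /output /and_protocol run_precompose /=.
by rewrite (run_ext P (row_input_one r.1 r.2 ps)); case: (run _ _).2.
Qed.

Definition err0 : R := \sum_(w : Assign) \sum_(y : Bits) lawWY w y *
  (if output P (fun i => inputWY w y i) then 1 else 0).

Definition err1 : R := \sum_(w : Assign) \sum_(y : Bits) lawWY w y *
  (n%:R^-1 * \sum_(j < n)
     (if output P (fun i => setcol (inputWY w y) j i) then 0 else 1)).

Lemma disj_errorE : disj_error nu P = 2^-1 * err0 + 2^-1 * err1.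
Proof. by rewrite /disj_error !D0_expectation. Qed.

Lemma err0_ge0 : 0 <= err0.
Proof.
apply: sumr_ge0 => w _; apply: sumr_ge0 => y _.
by rewrite mulr_ge0 ?lawWY_ge0 //; case: ifP.
Qed.

Lemma err1_ge0 : 0 <= err1.
Proof.
apply: sumr_ge0 => w _; apply: sumr_ge0 => y _; rewrite mulr_ge0 ?lawWY_ge0 //.
by rewrite mulr_ge0 ?invr_ge0 ?ler0n // sumr_ge0 // => j _; case: ifP.
Qed.

Lemma err_pushed_expect (F : 'I_n * (Assign * Bits) -> R) :
  \sum_t err_pushed_law t * F t = \sum_j n%:R^-1 * \sum_(w : Assign)
    coin_weight j w * \sum_(y : Bits) (2^-1)^+n * F (j, (w, y)).
Proof.
rewrite sum_pair; apply: eq_bigr => j _; rewrite sum_pair big_distrr /=.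
apply: eq_bigr => w _; rewrite big_distrr big_distrr /=; apply: eq_bigr => y _.
by rewrite /err_pushed_law /coin_law /= !mulrA.
Qed.

Lemma resample_column j (h : Assign -> R) : (forall w v, h (upd w j v) = h w) ->
  \sum_(w : Assign) coin_weight j w * h w = \sum_(w : Assign) (\prod_j' nu (w j')) * h w.
Proof.
move=> hj; case: nu_dist => _ nu_sum1.
pose G (w : Assign) := (\prod_(j' | j' != j) nu (w j')) * h w.
have Gj w v : G (upd w j v) = G w.
  rewrite /G hj; congr (_ * _); apply: eq_bigr => j' ne.
  by rewrite ffunE (negbTE ne).
transitivity (\sum_(w : Assign) (if w j == i0 then G w else 0)).
  apply: eq_bigr => w _; rewrite /coin_weight (bigD1 j) //= eqxx /G.
  rewrite (eq_bigr (fun j' => nu (w j'))); last by move=> j' /negbTE ->.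
  by case: ifP; rewrite ?mul1r ?mul0r.
symmetry.
transitivity (\sum_(w : Assign) \sum_v (if w j == v then nu v * G w else 0)).
  apply: eq_bigr => w _; rewrite (bigD1 (w j)) //= eqxx [X in _ + X]big1 ?addr0.
    by rewrite (bigD1 j) //= /G mulrA.
  by move=> v ne; rewrite eq_sym (negbTE ne).
rewrite exchange_big /= -(mulr1 (\sum_(w : Assign) _)) -nu_sum1 big_distrr /=.
apply: eq_bigr => v _; rewrite (sum_slice_swap i0 v Gj) big_distrl /=.
by apply: eq_bigr => w _; case: ifP; rewrite ?mul0r // mulrC.
Qed.

Lemma sum_zero_column_le j (f : Bits -> R) : (forall y, 0 <= f y) ->
  \sum_(y : Bits) f (upd y j false) <= 2 * \sum_(y : Bits) f y.
Proof.
move=> f_ge0.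
have -> : \sum_(y : Bits) f (upd y j false) =
  \sum_(y : Bits) (if y j == false then f (upd y j false) else 0) +
  \sum_(y : Bits) (if y j == true then f (upd y j false) else 0).
  rewrite -big_split; apply: eq_bigr => y _ /=.
  by case: (y j) => /=; rewrite ?addr0 ?add0r.
rewrite -(sum_slice_swap false true (G := fun y : Bits => f (upd y j false)));
  last by move=> y v; rewrite upd_upd.
have : \sum_(y : Bits) (if y j == false then f (upd y j false) else 0)
       <= \sum_(y : Bits) f y.
  by apply: ler_sum => y _; case: eqP => [e|_] //; rewrite -e upd_id.
move: (\sum_(y : Bits) (if _ then _ else _)) (\sum_(y : Bits) f y) => a b.
by lra.
Qed.

Lemma inputWY_upd_zero (w : Assign) y j v :
  inputWY (upd w j v) (upd y j false) = inputWY w (upd y j false).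
Proof.
apply/ffunP => i; apply/ffunP => j'; rewrite !ffunE.
by case: (j' == j); rewrite ?andbF.
Qed.

Lemma setcol_inputWY_upd (w : Assign) y j v :
  setcol (inputWY (upd w j v) y) j = setcol (inputWY w y) j.
Proof.
apply/ffunP => i; apply/ffunP => j'; rewrite !ffunE.
by case: eqP => //; rewrite !ffunE => /eqP /negbTE ->.
Qed.

Lemma and_error_zero_le : (0 < n)%N ->
  and_error coin_law priv_law and_protocol false <= 2 * err0.
Proof.
move=> n_gt0; rewrite and_error_zero_expect err_pushed_expect.
have -> : 2 * err0 = \sum_(j < n) n%:R^-1 * (2 * err0).
  rewrite -big_distrl /= sumr_const card_ord -[_ *+ n]mulr_natr.
  by rewrite mulVf ?mul1r // pnatr_eq0 -lt0n.
apply: ler_sum => j _; apply: ler_wpM2l; first by rewrite invr_ge0 ler0n.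
rewrite resample_column; last first.
  by move=> w v; apply: eq_bigr => y _; rewrite /wrong_on_zero /= inputWY_upd_zero.
rewrite /err0 big_distrr /=; apply: ler_sum => w _.
rewrite (_ : \sum_(y : Bits) lawWY w y * _ = \prod_j' nu (w j') *
   \sum_(y : Bits) (2^-1)^+n * (if output P (fun i => inputWY w y i) then 1 else 0));
  last by rewrite big_distrr; apply: eq_bigr => y _; rewrite /lawWY -mulrA.
case: nu_dist => nu_ge0 _.
rewrite mulrCA; apply: ler_wpM2l; first by apply: prodr_ge0 => j' _; apply: nu_ge0.
apply: (sum_zero_column_le j (f := fun y : Bits =>
  (2^-1)^+n * (if output P (fun i => inputWY w y i) then 1 else 0))).
by move=> y; rewrite mulr_ge0 ?exprn_ge0 ?invr_ge0 //; case: ifP.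
Qed.

Lemma and_error_one_eq : and_error coin_law priv_law and_protocol true = err1.
Proof.
rewrite and_error_one_expect err_pushed_expect.
transitivity (\sum_j n%:R^-1 * \sum_(w : Assign) (\prod_j' nu (w j')) *
    \sum_(y : Bits) (2^-1)^+n * wrong_on_one (j, (w, y))).
  apply: eq_bigr => j _; congr (_ * _); apply: resample_column => w v.
  by apply: eq_bigr => y _; rewrite /wrong_on_one /= setcol_inputWY_upd.
rewrite /err1.
under eq_bigr => j _ do rewrite big_distrr /=.
under eq_bigr => j _ do under eq_bigr => w _ do rewrite big_distrr /= big_distrr /=.
rewrite exchange_big /=; apply: eq_bigr => w _.
rewrite exchange_big /=; apply: eq_bigr => y _.
rewrite big_distrr big_distrr /=; apply: eq_bigr => j _.
rewrite /lawWY /wrong_on_one /=.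
move: (\prod_(j' < n) _) (2^-1 ^+ n) (n%:R^-1) (if _ then _ else _) => a b c d.
by ring.
Qed.

End Embedding.

Unset Implicit Arguments.

Theorem mainTheorem5 (R : realType) (n k : nat) (nu : 'I_k -> R)
  (P : protocol k {ffun 'I_n -> bool}) :
  (1 <= n)%N -> (2 <= k)%N ->
  is_dist nu -> (forall i, 0 < nu i) ->
  disj_error nu P <= 2%:R / 100%:R ->
  exists (RT PT : finType) (pR : RT -> R) (mu : 'I_k -> PT -> R)
         (Lam : RT -> protocol k (bool * PT)),
    [/\ is_dist pR, (forall i, is_dist (mu i)),
        and_error pR mu Lam false <= 8%:R / 100%:R,
        and_error pR mu Lam true <= 8%:R / 100%:R &
        infoL nu P = \sum_(i < k) and_info pR mu Lam i].
Proof.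
move=> n_ge1 k_ge2 nu_dist nu_gt0 P_err.
have i0 : 'I_k := Ordinal (leq_trans (ltn0Sn 1) k_ge2).
exists ('I_n * Assign n k)%type, (Bits n), (coin_law nu i0 (n := n)),
  (@priv_law R n k), (and_protocol P).
have err_avg : 2^-1 * err0 nu P + 2^-1 * err1 nu P <= 2%:R / 100%:R.
  by rewrite -disj_errorE.
have := err0_ge0 nu_dist P; have := err1_ge0 nu_dist P => err1_ge0 err0_ge0.
split.
- exact: dist_coin_law.
- exact: dist_priv_law.
- by apply: le_trans (and_error_zero_le nu_dist i0 P n_ge1) _; lra.
- by rewrite (and_error_one_eq nu_dist); lra.
- by apply: infoL_eq => // i; apply: lt0r_neq0.
Qed.
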